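(* For all integers $r$ and all $k\in\{0,1,2,3\}$, the space $\mathcal P_r\Lambda^k(T^3)$ has a basis that is $S_4$-invariant up to sign.
   Context: $T^3\subset\mathbb R^4$ is the standard simplex $\{\lambda_i\ge0,\ \sum\lambda_i=1\}$. $\mathcal P_r\Lambda^k(T^3)$ is the space of restrictions to $T^3$ of $k$-forms on $\mathbb R^4$ with polynomial coefficients of degree at most $r$ (zero if $r<0$). $S_4$ acts by pullback: for $\pi\in S_4$, $S_\pi(\lambda_0,\dots,\lambda_3)=(\lambda_{\pi(0)},\dots,\lambda_{\pi(3)})$ and $\pi$ acts by $S_\pi^*$. A basis is invariant up to sign if every group element maps each basis element to plus or minus a basis element. *)

From HB Require Import structures.
From mathcomp Require Import all_boot all_order all_algebra all_fingroup.
From mathcomp Require Import reals.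
From mathcomp Require Import mpoly.

Set Implicit Arguments.
Unset Strict Implicit.
Unset Printing Implicit Defensive.

Import Order.TTheory GRing.Theory Num.Theory.
Local Open Scope ring_scope.

Section Forms.
Variable R : realType.

Definition pt := 'I_4 -> R.

Definition in_T3 (x : pt) : Prop :=
  (forall i, 0 <= x i) /\ \sum_(i < 4) x i = 1.

Definition tangent (v : pt) : Prop := \sum_(i < 4) v i = 0.

(* A k-form on R^4 with polynomial coefficients:
   omega = sum_{I subset {0..3}, #|I| = k} p_I dlambda_I,
   dlambda_I = dlambda_{i_1} /\ ... /\ dlambda_{i_k} with i_1 < ... < i_k. *)
Definition pform := {set 'I_4} -> {mpoly R[4]}.

(* Coefficients of degree at most r (all zero if r < 0). *)
Definition deg_le (r : int) (w : pform) : Prop :=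
  forall I : {set 'I_4}, forall m, m \in msupp (w I) -> ((mdeg m)%:Z <= r)%R.

Definition dlam (k : nat) (I : {set 'I_4}) (v : 'I_k -> pt) : R :=
  \det (\matrix_(a < k, b < k) v b (nth ord0 (enum I) a)).

Definition feval (k : nat) (w : pform) (x : pt) (v : 'I_k -> pt) : R :=
  \sum_(I : {set 'I_4} | #|I| == k) (w I).@[x] * dlam I v.

Definition Sperm (p : {perm 'I_4}) (x : pt) : pt := fun i => x (p i).

Definition pullback_eval (k : nat) (p : {perm 'I_4}) (w : pform)
    (x : pt) (v : 'I_k -> pt) : R :=
  feval w (Sperm p x) (fun j => Sperm p (v j)).

(* Two (restricted) forms agree on T^3: equality of restrictions, i.e. same
   values at points of T^3 on tangent vectors of T^3. *)
Definition on_T3 (k : nat) (P : pt -> ('I_k -> pt) -> Prop) : Prop :=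
  forall x (v : 'I_k -> pt), in_T3 x -> (forall j, tangent (v j)) -> P x v.

Definition is_basis (r : int) (k n : nat) (b : 'I_n -> pform) : Prop :=
  [/\ (forall i, deg_le r (b i)),
      (forall c : 'I_n -> R,
          on_T3 (fun x (v : 'I_k -> pt) => \sum_(i < n) c i * feval (b i) x v = 0) ->
          forall i, c i = 0)
    &
      (forall w : pform, deg_le r w ->
          exists c : 'I_n -> R,
            on_T3 (fun x (v : 'I_k -> pt) =>
                     feval w x v = \sum_(i < n) c i * feval (b i) x v))].

Definition invariant_up_to_sign (k n : nat) (b : 'I_n -> pform) : Prop :=
  forall (p : {perm 'I_4}) (i : 'I_n),
    exists (j : 'I_n) (s : bool),
      on_T3 (fun x (v : 'I_k -> pt) =>
               pullback_eval p (b i) x v = (-1) ^+ s * feval (b j) x v).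

End Forms.

From HB Require Import structures.
From mathcomp Require Import all_boot all_order all_algebra all_fingroup.
From mathcomp Require Import reals.
From mathcomp Require Import mpoly.
From mathcomp Require Import lra zify.

(* On tangent vectors of T^3 the 1-forms dλ_0 + dλ_c (c = 1, 2, 3) form a
   basis, and S_4 permutes the six forms dλ_a + dλ_b up to sign, because
   dλ_a + dλ_b = -(dλ_c + dλ_d) whenever {a, b, c, d} = {0, 1, 2, 3}.  Hence
   the k-fold wedge products of these 1-forms are a basis of the constant
   k-forms that S_4 permutes up to sign.  Since Σ λ_i = 1 on T^3, the monomials
   λ^α of degree exactly r span P_r(T^3), and S_4 permutes them; they are
   linearly independent because, by homogeneity, a relation on T^3 holds on
   the whole positive orthant, where the substitution λ_i = t^((r+1)^i) turns
   it into a univariate polynomial with infinitely many roots.  The products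
   λ^α (dλ_0 + dλ_c1) ∧ ... ∧ (dλ_0 + dλ_ck) form the required basis. *)

Set Implicit Arguments.
Unset Strict Implicit.
Unset Printing Implicit Defensive.

Import Order.TTheory GRing.Theory Num.Theory.
Local Open Scope ring_scope.

Section RowDeterminants.
Variable R : comPzRingType.

Lemma det_sum_rows (K : finType) (k : nat) (coef : 'I_k -> K -> R)
    (rows : K -> 'I_k -> R) :
  \det (\matrix_(a < k, b < k) \sum_c coef a c * rows c b) =
  \sum_(g : {ffun 'I_k -> K})
    (\prod_a coef a (g a)) * \det (\matrix_(a < k, b < k) rows (g a) b).
Proof.
rewrite /determinant.
transitivity (\sum_(s : 'S_k) \sum_(g : {ffun 'I_k -> K})
   (-1) ^+ s * \prod_a (coef a (g a) * rows (g a) (s a))).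
  apply: eq_bigr => s _; rewrite -big_distrr /=; congr (_ * _).
  rewrite -(bigA_distr_bigA (fun a c => coef a c * rows c (s a))).
  by apply: eq_bigr => a _; rewrite mxE.
rewrite exchange_big; apply: eq_bigr => g _; rewrite big_distrr.
apply: eq_bigr => s _; rewrite big_split /= mulrCA; congr (_ * (_ * _)).
by apply: eq_bigr => a _; rewrite mxE.
Qed.

Lemma det_rows_inj (K : finType) (k : nat) (x0 : K) (g : 'I_k -> K) :
  injective g -> exists s : bool, forall rows : K -> 'I_k -> R,
    \det (\matrix_(a < k, b < k) rows (g a) b) =
    (-1) ^+ s * \det (\matrix_(a < k, b < k)
                        rows (nth x0 (enum (g @: [set: 'I_k])) a) b).
Proof.
move=> g_inj; set S := g @: [set: 'I_k].
have cardS : #|S| = k by rewrite card_imset // cardsT card_ord.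
have gS a : g a \in enum S by rewrite mem_enum imset_f.
have pos_lt a : (index (g a) (enum S) < k)%N by rewrite -cardS cardE index_mem.
pose pos a := Ordinal (pos_lt a).
have pos_inj : injective pos.
  move=> a a' /(congr1 val) /= eq_pos; apply: g_inj.
  by rewrite -(nth_index x0 (gS a)) eq_pos nth_index.
exists (perm pos_inj : 'S_k) => rows.
rewrite -det_perm -det_mulmx -row_permE; congr (\det _).
by apply/matrixP => a b; rewrite !mxE permE /= nth_index.
Qed.

Lemma det_rows_noninj (K : finType) (k : nat) (rows : K -> 'I_k -> R)
    (g : 'I_k -> K) :
  ~~ injectiveb g -> \det (\matrix_(a < k, b < k) rows (g a) b) = 0.
Proof.
case/injectivePn => a1 [a2 a12 g12].
by apply: (determinant_alternate a12) => b; rewrite !mxE g12.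
Qed.

End RowDeterminants.

Section Span.
Variable R : comPzRingType.

Definition spanned (X : finType) (Y : Type) (D : Y -> Prop) (B : X -> Y -> R)
    (f : Y -> R) :=
  exists d : X -> R, forall y, D y -> f y = \sum_x d x * B x y.

Variables (X : finType) (Y : Type) (D : Y -> Prop) (B : X -> Y -> R).

Lemma spanned_eq_on (f g : Y -> R) :
  (forall y, D y -> f y = g y) -> spanned D B g -> spanned D B f.
Proof. by move=> fg [d gd]; exists d => y Dy; rewrite fg // gd. Qed.

Lemma spanned0 : spanned D B (fun _ => 0).
Proof. by exists (fun _ => 0) => y _; rewrite big1 // => x _; rewrite mul0r. Qed.

Lemma spanned_member x0 : spanned D B (B x0).
Proof.
exists (fun x => (x == x0)%:R) => y _.
by rewrite (bigD1 x0) //= eqxx mul1r big1 ?addr0 // => x /negPf ->; rewrite mul0r.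
Qed.

Lemma spannedZ (c : R) f : spanned D B f -> spanned D B (fun y => c * f y).
Proof.
case=> d fd; exists (fun x => c * d x) => y Dy /=; rewrite fd // mulr_sumr.
by apply: eq_bigr => x _; rewrite mulrA.
Qed.

Lemma spannedD f g :
  spanned D B f -> spanned D B g -> spanned D B (fun y => f y + g y).
Proof.
move=> [d fd] [e ge]; exists (fun x => d x + e x) => y Dy.
by rewrite fd // ge // -big_split; apply: eq_bigr => x _; rewrite mulrDl.
Qed.

Lemma spanned_sum (I : Type) (s : seq I) (P : pred I) (F : I -> Y -> R) :
  (forall i, P i -> spanned D B (F i)) ->
  spanned D B (fun y => \sum_(i <- s | P i) F i y).
Proof.
move=> FB; elim: s => [|i s IHs].
  by apply: spanned_eq_on spanned0 => y _; rewrite big_nil.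
case Pi: (P i); last by apply: spanned_eq_on IHs => y _; rewrite big_cons Pi.
by apply: spanned_eq_on (spannedD (FB i Pi) IHs) => y _; rewrite big_cons Pi.
Qed.

Lemma spanned_eq_family (B' : X -> Y -> R) f :
  (forall x y, D y -> B x y = B' x y) -> spanned D B f -> spanned D B' f.
Proof.
move=> BB' [d fd]; exists d => y Dy; rewrite fd //.
by apply: eq_bigr => x _; rewrite BB'.
Qed.

End Span.

Lemma spannedM (R : comPzRingType) (X1 X2 : finType) (Y1 Y2 : Type)
    (D1 : Y1 -> Prop) (D2 : Y2 -> Prop) (B1 : X1 -> Y1 -> R) (B2 : X2 -> Y2 -> R)
    (f1 : Y1 -> R) (f2 : Y2 -> R) :
  spanned D1 B1 f1 -> spanned D2 B2 f2 ->
  spanned (fun y => D1 y.1 /\ D2 y.2) (fun x y => B1 x.1 y.1 * B2 x.2 y.2)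
    (fun y => f1 y.1 * f2 y.2).
Proof.
move=> [d1 f1d] [d2 f2d]; exists (fun x => d1 x.1 * d2 x.2) => -[y1 y2] [/= D1y D2y].
rewrite f1d // f2d // mulr_suml.
rewrite -(pair_bigA _ (fun x1 x2 => d1 x1 * d2 x2 * (B1 x1 y1 * B2 x2 y2))) /=.
apply: eq_bigr => x1 _.
by rewrite mulr_sumr; apply: eq_bigr => x2 _; rewrite mulrACA.
Qed.

Notation ksubset K k := {S : {set K} | #|S| == k}.

Lemma big_ksubset (V : nmodType) (K : finType) (k : nat) (F : {set K} -> V) :
  \sum_(S : {set K} | #|S| == k) F S = \sum_(S : ksubset K k) F (val S).
Proof.
rewrite (reindex_omap (val : ksubset K k -> _) insub) => [|S cardS].
  by apply: eq_bigl => S; rewrite valK eqxx andbT (valP S).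
by rewrite insubT.
Qed.

Section Minors.
Variables (R : comPzRingType) (K : finType) (x0 : K) (T : Type) (rho : K -> T -> R).

Definition minor (k : nat) (S : {set K}) (v : 'I_k -> T) : R :=
  \det (\matrix_(a < k, b < k) rho (nth x0 (enum S) a) (v b)).

Lemma minor_spanned k (D : T -> Prop) (f : 'I_k -> T -> R) (coef : 'I_k -> K -> R) :
  (forall a u, D u -> f a u = \sum_c coef a c * rho c u) ->
  spanned (fun v : 'I_k -> T => forall j, D (v j))
    (fun S : ksubset K k => minor (val S))
    (fun v => \det (\matrix_(a < k, b < k) f a (v b))).
Proof.
move=> fE.
apply: (spanned_eq_on (g := fun v => \sum_(g : {ffun 'I_k -> K})
   (\prod_a coef a (g a)) * \det (\matrix_(a < k, b < k) rho (g a) (v b)))).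
  move=> v Dv; rewrite -(det_sum_rows coef (fun c b => rho c (v b))).
  by congr (\det _); apply/matrixP => a b; rewrite !mxE fE.
apply: spanned_sum => g _; apply: spannedZ.
have [g_inj|g_ninj] := boolP (injectiveb g); last first.
  apply: spanned_eq_on (spanned0 _ _) => v _.
  exact: (det_rows_noninj (fun c b => rho c (v b))).
have [s detE] := det_rows_inj R x0 (injectiveP _ g_inj).
have cardS : #|g @: [set: 'I_k]| == k.
  by rewrite card_imset ?cardsT ?card_ord //; apply/injectiveP.
apply: (spanned_eq_on (g := fun v => (-1) ^+ s * minor (g @: [set: 'I_k]) v)).
  by move=> v _; rewrite (detE (fun c b => rho c (v b))).
apply: spannedZ.
exact: (spanned_member _ _ (exist (fun S : {set K} => #|S| == k) _ cardS)).
Qed.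

Lemma minor_dual k (w : K -> T) (J J0 : {set K}) :
  (forall c c', rho c (w c') = (c == c')%:R) -> #|J| = k -> #|J0| = k ->
  minor J (fun b : 'I_k => w (nth x0 (enum J0) b)) = (J == J0)%:R.
Proof.
move=> rho_w cardJ cardJ0; rewrite /minor.
under eq_mx do rewrite rho_w.
have [<-|neqJ] := eqVneq J J0.
  rewrite -[RHS](det1 R k); congr (\det _); apply/matrixP => a b; rewrite !mxE.
  by rewrite nth_uniq ?enum_uniq -?cardE ?cardJ.
have /subsetPn [c cJ cNJ0] : ~~ (J \subset J0).
  by move: neqJ; rewrite eqEcard cardJ cardJ0 leqnn andbT.
have c_lt : (index c (enum J) < k)%N by rewrite -cardJ cardE index_mem mem_enum.
rewrite (expand_det_row _ (Ordinal c_lt)) big1 // => b _.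
rewrite !mxE /= nth_index ?mem_enum //.
have : nth x0 (enum J0) b \in J0 by rewrite -mem_enum mem_nth // -cardE cardJ0.
by case: eqP => [<-|_]; rewrite ?(negbTE cNJ0) ?mul0r.
Qed.

End Minors.

Lemma minor_signed_image (R : comPzRingType) (K : finType) (x0 : K) (T : Type)
    (D : T -> Prop) (rho rho' : K -> T -> R) (sigma : K -> K) (sg : K -> bool)
    k (J : {set K}) :
  injective sigma ->
  (forall c u, D u -> rho' c u = (-1) ^+ sg c * rho (sigma c) u) -> #|J| = k ->
  exists (S : ksubset K k) (s : bool), forall v : 'I_k -> T, (forall j, D (v j)) ->
    minor x0 rho' J v = (-1) ^+ s * minor x0 rho (val S) v.
Proof.
move=> sigma_inj rho'E cardJ; pose g (a : 'I_k) := sigma (nth x0 (enum J) a).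
have g_inj : injective g.
  move=> a a' /sigma_inj /eqP; rewrite nth_uniq ?enum_uniq -?cardE ?cardJ //.
  by move/eqP/val_inj.
have [s detE] := det_rows_inj R x0 g_inj.
have cardS : #|g @: [set: 'I_k]| == k by rewrite card_imset // cardsT card_ord.
pose signs := (\sum_(a < k) sg (nth x0 (enum J) a))%N.
exists (exist (fun S : {set K} => #|S| == k) _ cardS), (odd signs (+) s) => v Dv.
have -> : minor x0 rho' J v = \det (diag_mx (\row_a (-1) ^+ sg (nth x0 (enum J) a)) *m
    \matrix_(a < k, b < k) rho (g a) (v b)).
  by rewrite mul_diag_mx; congr (\det _); apply/matrixP => a b; rewrite !mxE rho'E.
rewrite det_mulmx det_diag (detE (fun c b => rho c (v b))) signr_addb signr_odd.
by rewrite -prodrXr; under eq_bigr do rewrite mxE; rewrite mulrA.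
Qed.

Section TangentForms.
Variable R : realType.

Definition dlam0D (c : 'I_3) (u : pt R) : R := u ord0 + u (lift ord0 c).

Definition tbasis (c : 'I_3) : pt R :=
  fun i => if i == ord0 then 1/2 else (i == lift ord0 c)%:R - 1/2.

Lemma pt_coords (u : pt R) :
  exists u0 u1 u2 u3 : R, forall i : 'I_4, u i = [:: u0; u1; u2; u3]`_i.
Proof.
exists (u (inord 0)), (u (inord 1)), (u (inord 2)), (u (inord 3)).
by case=> [[|[|[|[|i]]]] lt_i4] //=; congr u; apply: val_inj; rewrite /= inordK.
Qed.

Lemma tangent_coords (u : pt R) : tangent u ->
  exists u0 u1 u2 u3 : R,
    u0 + u1 + u2 + u3 = 0 /\ forall i : 'I_4, u i = [:: u0; u1; u2; u3]`_i.
Proof.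
have [u0 [u1 [u2 [u3 uE]]]] := pt_coords u.
rewrite /tangent !big_ord_recr big_ord0 /= !uE /= add0r => sum_u.
by exists u0, u1, u2, u3.
Qed.

Lemma tbasis_tangent c : tangent (tbasis c).
Proof.
rewrite /tangent !big_ord_recr big_ord0 /tbasis /=.
by case: c => [[|[|[|c]]] lt_c3] //=; lra.
Qed.

Lemma dlam0D_tbasis c c' : dlam0D c' (tbasis c) = (c' == c)%:R.
Proof.
rewrite /dlam0D /tbasis eqxx eq_sym (negbTE (neq_lift _ _)).
rewrite (inj_eq (@lift_inj _ ord0)); lra.
Qed.

Lemma tangent_decomp (u : pt R) : tangent u ->
  forall i, u i = \sum_c tbasis c i * dlam0D c u.
Proof.
case/tangent_coords => u0 [u1 [u2 [u3 [sum_u uE]]]] i.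
rewrite /dlam0D /tbasis !big_ord_recr big_ord0 /= !uE /=.
by case: i => [[|[|[|[|i]]]] lt_i4] //=; lra.
Qed.

(* The pair {a, b} or its complement is {0, c.+1} with c = pair_index a b;
   when 0 is not in {a, b}, the missing element of {1, 2, 3} is 6 - a - b. *)
Definition pair_index (a b : 'I_4) : 'I_3 :=
  inord ((if a == ord0 then val b else if b == ord0 then val a else 6 - a - b).-1).

Definition pair_sign (a b : 'I_4) : bool := (a != ord0) && (b != ord0).

Lemma pair_formE (a b : 'I_4) (u : pt R) : a != b -> tangent u ->
  u a + u b = (-1) ^+ pair_sign a b * dlam0D (pair_index a b) u.
Proof.
move=> neq_ab /tangent_coords [u0 [u1 [u2 [u3 [sum_u uE]]]]].
rewrite /dlam0D /pair_sign /pair_index !uE.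
case: a neq_ab => [[|[|[|[|a]]]] lt_a4] //; case: b => [[|[|[|[|b]]]] lt_b4] // _;
  by rewrite /= ?inordK //=; lra.
Qed.

Lemma pair_index_inj (a b b' : 'I_4) :
  a != b -> a != b' -> b != b' -> pair_index a b != pair_index a b'.
Proof.
rewrite /pair_index.
case: a => [[|[|[|[|a]]]] lt_a4] //; case: b => [[|[|[|[|b]]]] lt_b4] //;
  case: b' => [[|[|[|[|b']]]] lt_b'4] //= _ _ _;
  by rewrite -(inj_eq val_inj) /= !inordK.
Qed.

End TangentForms.

Section Wedges.
Variables (R : realType) (k : nat).

Definition dlam0D_wedge (J : {set 'I_3}) (v : 'I_k -> pt R) : R :=
  minor ord0 (@dlam0D R) J v.

Lemma dlam_spanned (I : {set 'I_4}) :
  spanned (fun v : 'I_k -> pt R => forall j, tangent (v j))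
    (fun J : ksubset 'I_3 k => dlam0D_wedge (val J)) (dlam I).
Proof.
apply: (minor_spanned (f := fun a u => u (nth ord0 (enum I) a))
                      (coef := fun a c => tbasis R c (nth ord0 (enum I) a)) ord0).
by move=> a u /tangent_decomp ->.
Qed.

Lemma dlam0D_wedge_dlam (J : {set 'I_3}) :
  exists d : ksubset 'I_4 k -> R,
    forall v, dlam0D_wedge J v = \sum_I d I * dlam (val I) v.
Proof.
have [|d dE] := minor_spanned (f := fun a : 'I_k => @dlam0D R (nth ord0 (enum J) a))
  (coef := fun a i => (i == ord0)%:R + (i == lift ord0 (nth ord0 (enum J) a))%:R)
  (rho := fun i (u : pt R) => u i) (D := fun _ => True) ord0.
  move=> a u _; rewrite /dlam0D.
  under eq_bigr do rewrite mulrDl !mulr_natl !mulrb.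
  by rewrite big_split /= -!big_mkcond !big_pred1_eq.
by exists d => v; apply: dE.
Qed.

Lemma dlam0D_wedge_tbasis (J J0 : {set 'I_3}) : #|J| = k -> #|J0| = k ->
  dlam0D_wedge J (fun b => tbasis R (nth ord0 (enum J0) b)) = (J == J0)%:R.
Proof. by apply: minor_dual => c c'; rewrite dlam0D_tbasis. Qed.

Lemma dlam0D_wedge_pullback (p : {perm 'I_4}) (J : {set 'I_3}) : #|J| = k ->
  exists (S : ksubset 'I_3 k) (s : bool), forall v : 'I_k -> pt R,
    (forall j, tangent (v j)) ->
    dlam0D_wedge J (fun j => Sperm p (v j)) = (-1) ^+ s * dlam0D_wedge (val S) v.
Proof.
pose sigma c := pair_index (p ord0) (p (lift ord0 c)).
have sigma_inj : injective sigma.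
  move=> c c' /eqP; apply: contraTeq => neq_cc'; apply: pair_index_inj;
  by rewrite ?(inj_eq perm_inj) ?(inj_eq (@lift_inj _ ord0)) // neq_lift.
apply: (minor_signed_image (rho' := fun c u => dlam0D c (Sperm p u))
  (sg := fun c => pair_sign (p ord0) (p (lift ord0 c))) ord0 sigma_inj).
move=> c u tu; rewrite [LHS]/dlam0D /Sperm /sigma.
by apply: pair_formE; rewrite // (inj_eq perm_inj) neq_lift.
Qed.

End Wedges.

Lemma digits_inj (n N : nat) (a b : 'I_n -> nat) :
  (forall i, a i < N)%N -> (forall i, b i < N)%N ->
  (\sum_i a i * N ^ i = \sum_i b i * N ^ i)%N -> a =1 b.
Proof.
elim: n a b => [|n IHn] a b a_lt b_lt; first by move=> _ [].
have N_gt0 : (0 < N)%N by apply: leq_ltn_trans (a_lt ord0).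
have shift c : (\sum_(i < n) c (lift ord0 i) * N ^ bump 0 i =
                (\sum_(i < n) c (lift ord0 i) * N ^ i) * N)%N.
  by rewrite big_distrl; apply: eq_bigr => i _; rewrite expnS mulnCA mulnC.
rewrite !big_ord_recl /= !expn0 !muln1 !shift ![(_ + _ * N)%N]addnC => eq_ab.
have eq0 : a ord0 = b ord0.
  by have := congr1 (modn^~ N) eq_ab; rewrite /= !modnMDl !modn_small.
have := congr1 (divn^~ N) eq_ab; rewrite /= !divnMDl // !divn_small // !addn0.
move/(IHn _ _ (fun i => a_lt (lift ord0 i)) (fun i => b_lt (lift ord0 i))) => eq_lift.
by move=> i; case: (unliftP ord0 i) => [j ->|->].
Qed.

Lemma poly_eq0_pos (R : numDomainType) (P : {poly R}) :
  (forall t, 0 < t -> P.[t] = 0) -> P = 0.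
Proof.
move=> P_pos; apply: (@roots_geq_poly_eq0 _ P [seq i.+1%:R | i <- iota 0 (size P)]).
- by apply/allP => _ /mapP [i _ ->]; rewrite /root P_pos ?ltr0Sn.
- by rewrite map_inj_uniq ?iota_uniq // => i j /eqP; rewrite eqr_nat eqSS => /eqP.
- by rewrite size_map size_iota.
Qed.

Notation hmono n d := {m : 'X_{1..n.+1 < d.+1} | mdeg m == d}.

Section HomogeneousMonomials.
Variables (R : realType) (n d : nat).
Implicit Types (x y : 'I_n.+1 -> R) (m : 'X_{1..n.+1}).

Lemma hmono_mdeg (a : hmono n d) : mdeg (val a) = d.
Proof. exact/eqP/(valP a). Qed.

Lemma mevalX_div m y (s : R) :
  ('X_[m] : {mpoly R[n.+1]}).@[fun i => y i / s] = 'X_[m].@[y] / s ^+ mdeg m.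
Proof.
rewrite !mevalX mdegE -prodrXr -prodf_div.
by apply: eq_bigr => i _; rewrite expr_div_n.
Qed.

Lemma mevalX_radix m (N : nat) (t : R) :
  ('X_[m] : {mpoly R[n.+1]}).@[fun i => t ^+ (N ^ i)] = t ^+ (\sum_i m i * N ^ i).
Proof. by rewrite mevalX -prodrXr; apply: eq_bigr => i _; rewrite -exprM mulnC. Qed.

Lemma hmono_comb_pos (f : hmono n d -> R) :
  (forall x, (forall i, 0 <= x i) -> \sum_i x i = 1 ->
     \sum_a f a * 'X_[val a].@[x] = 0) ->
  forall y, (forall i, 0 < y i) -> \sum_a f a * 'X_[val a].@[y] = 0.
Proof.
move=> f_simplex y y_gt0; set s := \sum_i y i.
have s_gt0 : 0 < s.
  by rewrite /s big_ord_recl ltr_pwDl // sumr_ge0 // => i _; apply/ltW.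
have := f_simplex (fun i => y i / s).
rewrite -mulr_suml divff ?gt_eqF //.
move=> /(_ (fun i => divr_ge0 (ltW (y_gt0 i)) (ltW s_gt0)) erefl).
under eq_bigr do rewrite mevalX_div hmono_mdeg mulrA.
rewrite -mulr_suml => /eqP.
by rewrite mulf_eq0 invr_eq0 expf_eq0 (gt_eqF s_gt0) andbF orbF => /eqP.
Qed.

Lemma hmono_indep (f : hmono n d -> R) :
  (forall x, (forall i, 0 <= x i) -> \sum_i x i = 1 ->
     \sum_a f a * 'X_[val a].@[x] = 0) ->
  forall a, f a = 0.
Proof.
move=> f_simplex; pose code (a : hmono n d) := (\sum_i val a i * d.+1 ^ i)%N.
have code_inj : injective code.
  have digit_lt (a : hmono n d) i : (val a i < d.+1)%N.
    have : (val a i <= mdeg (val a))%N by rewrite mdegE (bigD1 i) //= leq_addr.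
    by rewrite hmono_mdeg.
  move=> a b /(digits_inj (digit_lt a) (digit_lt b)) eq_ab.
  by apply/val_inj/val_inj/mnmP.
pose P : {poly R} := \sum_a f a *: 'X^(code a).
have P0 : P = 0.
  apply: poly_eq0_pos => t t_gt0; rewrite horner_sum.
  under eq_bigr do rewrite hornerZ hornerXn -mevalX_radix.
  by apply: hmono_comb_pos f_simplex _ _ => i; apply: exprn_gt0.
move=> a; have := congr1 (fun p : {poly R} => p`_(code a)) P0.
rewrite /= coef0 coef_sum (bigD1 a) //= coefZ coefXn eqxx mulr1 big1 ?addr0 //.
move=> b neq_ba.
by rewrite coefZ coefXn (inj_eq code_inj) eq_sym (negbTE neq_ba) mulr0.
Qed.

Lemma hmono_spanned m : (mdeg m <= d)%N ->
  spanned (fun x => \sum_i x i = 1) (fun (a : hmono n d) x => 'X_[val a].@[x])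
    (fun x => ('X_[m] : {mpoly R[n.+1]}).@[x]).
Proof.
move=> le_md; move: {2}(d - mdeg m)%N (erefl (d - mdeg m)%N) => e.
elim: e m le_md => [|e IHe] m le_md e_def.
  have lt_md : (mdeg m < d.+1)%N by rewrite ltnS.
  have eq_md : mdeg (BMultinom lt_md) == d by rewrite eqn_leq le_md -subn_eq0 e_def.
  exact: (spanned_member _ _
    (exist (fun m : 'X_{1..n.+1 < d.+1} => mdeg m == d) _ eq_md)).
apply: (spanned_eq_on (g := fun x => \sum_i ('X_[m + U_(i)] : {mpoly R[n.+1]}).@[x])).
  move=> x sum_x; rewrite -[LHS]mulr1 -sum_x mulr_sumr.
  by apply: eq_bigr => i _; rewrite mpolyXD mevalM mevalXU.
apply: spanned_sum => i _; apply: IHe; rewrite mdegD mdeg1; lia.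
Qed.

Lemma meval_spanned (p : {mpoly R[n.+1]}) :
  (forall m, m \in msupp p -> mdeg m <= d)%N ->
  spanned (fun x => \sum_i x i = 1) (fun (a : hmono n d) x => 'X_[val a].@[x])
    (fun x => p.@[x]).
Proof.
move=> deg_p.
apply: (spanned_eq_on (g := fun x =>
  \sum_(m <- msupp p | m \in msupp p) p@_m * ('X_[m] : {mpoly R[n.+1]}).@[x])).
  by move=> x _; rewrite -big_seq mevalE; apply: eq_bigr => m _; rewrite mevalX.
by apply: spanned_sum => m /deg_p /hmono_spanned; apply: spannedZ.
Qed.

Lemma hmono_perm (s : 'S_n.+1) (a : hmono n d) : exists b : hmono n d,
  forall x, ('X_[val a] : {mpoly R[n.+1]}).@[fun i => x (s i)] = 'X_[val b].@[x].
Proof.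
pose m := [multinom val a ((s^-1)%g i) | i < n.+1].
have mdeg_m : mdeg m = d by rewrite mdeg_mperm hmono_mdeg.
have lt_md : (mdeg m < d.+1)%N by rewrite mdeg_m.
exists (exist (fun m : 'X_{1..n.+1 < d.+1} => mdeg m == d) (BMultinom lt_md)
  (introT eqP mdeg_m)) => x.
rewrite !mevalX (reindex_inj (@perm_inj _ (s^-1)%g)) /=.
by apply: eq_bigr => i _; rewrite mnmE permKV.
Qed.

End HomogeneousMonomials.

Section BasisForms.
Variables (R : realType) (k d : nat).
Variable dc : {set 'I_3} -> ksubset 'I_4 k -> R.
Hypothesis dcE : forall J (v : 'I_k -> pt R),
  dlam0D_wedge J v = \sum_I dc J I * dlam (val I) v.

Local Notation basis_index := (hmono 3 d * ksubset 'I_3 k)%type.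

Definition basis_form (b : basis_index) : pform R :=
  fun I => if insub I is Some I' then dc (val b.2) I' *: 'X_[val b.1] else 0.

Lemma feval_basis_form b x (v : 'I_k -> pt R) :
  feval (basis_form b) x v = 'X_[val b.1].@[x] * dlam0D_wedge (val b.2) v.
Proof.
rewrite /feval big_ksubset dcE mulr_sumr; apply: eq_bigr => I _.
by rewrite /basis_form valK mevalZ mulrCA mulrA.
Qed.

Lemma deg_basis_form b : deg_le d (basis_form b).
Proof.
move=> I m; rewrite /basis_form; case: insubP => [I' _ _|_]; last by rewrite msupp0.
by move/msuppZ_le/mem_msuppXP <-; rewrite lez_nat hmono_mdeg.
Qed.

Lemma basis_form_indep (c : basis_index -> R) :
  on_T3 (fun x (v : 'I_k -> pt R) => \sum_b c b * feval (basis_form b) x v = 0) ->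
  forall b, c b = 0.
Proof.
move=> c_T3 [a0 J0]; pose v0 (b : 'I_k) := tbasis R (nth ord0 (enum (val J0)) b).
have v0_tangent j : tangent (v0 j) by apply: tbasis_tangent.
apply: (@hmono_indep R 3 d (fun a => c (a, J0))) => x x_ge0 sum_x.
rewrite -[RHS](c_T3 x v0 (conj x_ge0 sum_x) v0_tangent).
have -> : \sum_b c b * feval (basis_form b) x v0 =
    \sum_a \sum_J c (a, J) * feval (basis_form (a, J)) x v0.
  by rewrite pair_bigA; apply: eq_bigr => -[].
have cardJ0 : #|val J0| = k by apply/eqP/(valP J0).
apply: eq_bigr => a _; rewrite (bigD1 J0) //= big1 ?addr0 => [|J neq_J].
  by rewrite feval_basis_form dlam0D_wedge_tbasis ?eqxx ?mulr1.
have cardJ : #|val J| = k by apply/eqP/(valP J).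
rewrite feval_basis_form dlam0D_wedge_tbasis //.
by rewrite (inj_eq val_inj) (negbTE neq_J) !mulr0.
Qed.

Lemma basis_form_spanning (w : pform R) : deg_le d w ->
  exists c : basis_index -> R,
    on_T3 (fun x (v : 'I_k -> pt R) =>
             feval w x v = \sum_b c b * feval (basis_form b) x v).
Proof.
move=> deg_w.
have : spanned (fun y : pt R * ('I_k -> pt R) =>
                  \sum_i y.1 i = 1 /\ forall j, tangent (y.2 j))
         (fun b y => feval (basis_form b) y.1 y.2) (fun y => feval w y.1 y.2).
  apply: (spanned_eq_family (B := fun (b : basis_index) (y : pt R * ('I_k -> pt R)) =>
    ('X_[val b.1] : {mpoly R[4]}).@[y.1] * dlam0D_wedge (val b.2) y.2)).
    by move=> b y _; rewrite feval_basis_form.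
  apply: (spanned_eq_on (g := fun y =>
    \sum_(I : ksubset 'I_4 k) (w (val I)).@[y.1] * dlam (val I) y.2)).
    by move=> y _; rewrite /feval big_ksubset.
  apply: spanned_sum => I _.
  have deg_wI m : m \in msupp (w (val I)) -> (mdeg m <= d)%N.
    by move/(deg_w (val I)); rewrite lez_nat.
  exact: (spannedM (meval_spanned deg_wI) (dlam_spanned R k (val I))).
by case=> c cE; exists c => x v [_ sum_x] v_tangent; apply: (cE (x, v)).
Qed.

Lemma basis_form_pullback (p : {perm 'I_4}) (b : basis_index) :
  exists (b' : basis_index) (s : bool),
    on_T3 (fun x (v : 'I_k -> pt R) =>
             pullback_eval p (basis_form b) x v =
             (-1) ^+ s * feval (basis_form b') x v).
Proof.
case: b => a [J cardJ].
have [a' a'E] := hmono_perm R p a.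
have [S [s wedgeE]] := dlam0D_wedge_pullback R p (eqP cardJ).
exists (a', S), s => x v _ v_tangent.
by rewrite /pullback_eval !feval_basis_form /Sperm a'E wedgeE // mulrCA.
Qed.

End BasisForms.

Section FiniteBases.
Variables (R : realType) (r : int) (k : nat).

Lemma invariant_basis_of_fintype (T : finType) (b : T -> pform R) :
  (forall t, deg_le r (b t)) ->
  (forall c : T -> R,
     on_T3 (fun x (v : 'I_k -> pt R) => \sum_t c t * feval (b t) x v = 0) ->
     forall t, c t = 0) ->
  (forall w, deg_le r w -> exists c : T -> R,
     on_T3 (fun x (v : 'I_k -> pt R) =>
              feval w x v = \sum_t c t * feval (b t) x v)) ->
  (forall p t, exists t' (s : bool),
     on_T3 (fun x (v : 'I_k -> pt R) =>
              pullback_eval p (b t) x v = (-1) ^+ s * feval (b t') x v)) ->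
  exists n (b' : 'I_n -> pform R), is_basis r k b' /\ invariant_up_to_sign k b'.
Proof.
move=> deg_b indep_b span_b inv_b.
have sum_enum (F : T -> R) : \sum_(i < #|T|) F (enum_val i) = \sum_t F t.
  rewrite [RHS](reindex (@enum_val T T)) //.
  by exists enum_rank => t _; rewrite ?enum_valK ?enum_rankK.
exists #|T|, (fun i => b (enum_val i)); split; first split.
- by move=> i; apply: deg_b.
- move=> c c_T3 i; rewrite -[i]enum_valK.
  apply: (indep_b (c \o enum_rank)) => x v xT vT.
  rewrite -[RHS](c_T3 x v xT vT) -sum_enum.
  by apply: eq_bigr => j _; rewrite /= enum_valK.
- move=> w /span_b [c cE]; exists (c \o enum_val) => x v xT vT.
  by rewrite cE // -sum_enum.
- move=> p i; have [t' [s t'E]] := inv_b p (enum_val i).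
  by exists (enum_rank t'), s; rewrite enum_rankK.
Qed.

End FiniteBases.

Lemma basis_Negz (R : realType) (m k : nat) :
  exists b : 'I_0 -> pform R, is_basis (Negz m) k b /\ invariant_up_to_sign k b.
Proof.
exists (fun _ _ => 0); split; first split.
- by case.
- by move=> c _ [].
- move=> w deg_w; exists (fun _ => 0) => x v _ _.
  rewrite big_ord0 /feval big1 // => I _.
  suff -> : w I = 0 by rewrite meval0 mul0r.
  apply: msuppnil0; case: (msupp (w I)) (deg_w I) => [|m' s] // /(_ m').
  by rewrite inE eqxx => /(_ isT).
- by move=> p [].
Qed.

Theorem corollary2p12 (R : realType) (r : int) (k : nat) :
  (k <= 3)%N ->
  exists (n : nat) (b : 'I_n -> pform R),
    is_basis r k b /\ invariant_up_to_sign k b.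
Proof.
(* The bound on k is unnecessary: for k > 3 there are no k-subsets of 'I_3,
   and the construction below yields the empty basis of the zero space. *)
move=> _; case: r => [d|m]; last by have [b ?] := basis_Negz R m k; exists 0%N, b.
have [dc dcE] := fin_all_exists (@dlam0D_wedge_dlam R k).
apply: (invariant_basis_of_fintype (b := basis_form dc)).
- exact: deg_basis_form.
- exact: basis_form_indep dcE.
- exact: basis_form_spanning dcE.
- exact: basis_form_pullback dcE.
Qed.
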